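(* Let $A$ be a linear Nakayama algebra with simple modules $S_0,\dots,S_{n-1}$, Kupisch series $[c_0,\dots,c_{n-1}]$ and Jacobson radical $J$, and let $d_j=\dim_K D(Ae_j)$. Let $0\le i\le n-1$ and $1\le k\le c_i$. Then the indecomposable module $e_iA/e_iJ^k$ has injective dimension at most one if and only if either $k=d_{i+k-1}$, or ($k<d_{i+k-1}$ and $d_{i+k-1}-k=d_{i-1}$) (with the convention $d_{-1}:=0$). Moreover, $k=d_{i+k-1}$ holds if and only if $e_iA/e_iJ^k$ is injective.
   Context: $K$ is a field; a linear Nakayama algebra with $n$ simple modules is a connected algebra $A=KQ/I$ with $Q$ the quiver $0\to1\to\cdots\to n-1$ and $I$ admissible; modules are finite-dimensional right modules. $e_i$ are the primitive idempotents and $S_i$ the simple modules; $e_iA$ is uniserial with composition factors $S_i,S_{i+1},\dots,S_{i+c_i-1}$ from top to socle, where $c_i=\dim_K e_iA$ ([$c_0,\dots,c_{n-1}$] is the Kupisch series). $D=\operatorname{Hom}_K(-,K)$, and $D(Ae_j)$ is the indecomposable injective module with socle $S_j$ (the injective envelope of $S_j$). *)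

From HB Require Import structures.
From mathcomp Require Import all_boot all_order all_algebra.
Set Implicit Arguments. Unset Strict Implicit. Unset Printing Implicit Defensive.
Import GRing.Theory.
Local Open Scope ring_scope.

(* Linear Nakayama algebra A = KQ/I, Q : 0 -> 1 -> ... -> n-1, given by its
   Kupisch series c_i = dim_K e_i A (i < n).  Admissible + connected means:
   c_{n-1} = 1, c_i >= 2 for i < n-1, c_{i+1} >= c_i - 1; also paths
   stay inside the quiver: i + c_i <= n (a consequence of the above).     *)
Definition kupisch (n : nat) (c : nat -> nat) : Prop :=
  [/\ (0 < n)%N, c n.-1 = 1%N,
      (forall i, (i.+1 < n)%N -> (2 <= c i)%N),
      (forall i, (i.+1 < n)%N -> (c i - 1 <= c i.+1)%N)
    & (forall i, (i < n)%N -> (i + c i <= n)%N)].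

(* Finite-dimensional right A-modules = representations of the bound quiver:
   a vector space M e_j for every vertex j (as row vectors K^(rdim j)) and,
   for the arrow j -> j+1, the linear map M e_j -> M e_{j+1} (right action of
   the arrow), written as a matrix acting on row vectors. *)
Record rep (K : fieldType) := Rep {
  rdim : nat -> nat ;
  rmap : forall j, 'M[K]_(rdim j, rdim j.+1)
}.

Fixpoint path_mx (K : fieldType) (M : rep K) (i l : nat)
  : 'M[K]_(rdim M i, rdim M (l + i)) :=
  match l return 'M[K]_(rdim M i, rdim M (l + i)) with
  | 0 => 1%:M
  | l'.+1 => path_mx M i l' *m rmap M (l' + i)
  end.

Definition is_module (K : fieldType) (n : nat) (c : nat -> nat) (M : rep K) : Prop :=
  (forall j, (n <= j)%N -> rdim M j = 0%N) /\
  (forall i, (i < n)%N -> path_mx M i (c i) = 0).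

Definition homT (K : fieldType) (M N : rep K) :=
  forall j, 'M[K]_(rdim M j, rdim N j).

Definition is_hom (K : fieldType) (M N : rep K) (f : homT M N) : Prop :=
  forall j, rmap M j *m f j.+1 = f j *m rmap N j.

Definition is_mono (K : fieldType) (M N : rep K) (f : homT M N) : Prop :=
  forall j, row_free (f j).

Definition is_epi (K : fieldType) (M N : rep K) (f : homT M N) : Prop :=
  forall j, row_full (f j).

Definition injective_module (K : fieldType) (n : nat) (c : nat -> nat) (I : rep K) : Prop :=
  is_module n c I /\
  forall (X Y : rep K) (f : homT X Y) (g : homT X I),
    is_module n c X -> is_module n c Y ->
    is_hom f -> is_mono f -> is_hom g ->
    exists h : homT Y I, is_hom h /\ forall j, f j *m h j = g j.

Definition injdim_le1 (K : fieldType) (n : nat) (c : nat -> nat) (M : rep K) : Prop :=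
  exists (I0 I1 : rep K) (f : homT M I0) (g : homT I0 I1),
    [/\ injective_module n c I0, injective_module n c I1,
        is_hom f /\ is_hom g,
        is_mono f /\ is_epi g &
        forall j, f j *m g j = 0 /\ (kermx (g j) <= f j)%MS].

(* The module e_i A / e_i J^k: basis the paths of length < k starting at i,
   i.e. one-dimensional at vertices i, ..., i+k-1, arrows acting by 1. *)
Definition quot_mod (K : fieldType) (i k : nat) : rep K :=
  @Rep K (fun j => if (i <= j < i + k)%N then 1%N else 0%N)
    (fun j => const_mx 1).

(* d_j = dim_K D(A e_j) = dim_K A e_j = number of nonzero paths ending at j,
   i.e. number of l <= j with j - l < c_l. *)
Definition dimInj (c : nat -> nat) (j : nat) : nat :=
  count (fun l => (j < l + c l)%N) (iota 0 j.+1).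

Definition dimInj_pred (c : nat -> nat) (i : nat) : nat :=
  if i is i'.+1 then dimInj c i' else 0%N.

From mathcomp Require Import all_boot all_order all_algebra.
From mathcomp Require Import zify.
Set Implicit Arguments. Unset Strict Implicit. Unset Printing Implicit Defensive.
Import GRing.Theory.
Local Open Scope ring_scope.

(* Write [a, b] for the interval module e_aA/e_aJ^(b-a+1), one-dimensional on
   the vertices a, ..., b.  A nonzero path from l reaches t iff
   l <= t < l + c_l; as l + c_l is monotone, these l form an interval [s, t]
   with s = t + 1 - d_t, and D(Ae_t) = [s, t].  In an injective module, an
   element at b killed by the path b -> e is the image of an element at a
   under the path a -> b as soon as [a, e - 1] is a module: extend the map it
   defines on [b, e - 1] to [a, e - 1].  Hence [a, t] is injective iff it
   cannot be prolonged to the left, i.e. iff its length is d_t.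
   If k < d_t, the sequence 0 -> [i, t] -> [s, t] -> [s, i - 1] -> 0 gives
   injective dimension at most one once [s, i - 1] is injective, i.e. once
   i - s = d_{i-1}.  Conversely, take 0 -> M -> I0 -> I1 -> 0 and a = s - 1
   reaching i - 1 but not t.  The top x of M in I0 is the image of some y at
   s; the image of y in I1 is killed by the path s -> i, hence comes from a,
   and lifting it along I0 -> I1 shows, by exactness at s where M vanishes,
   that y comes from a.  So the socle of M, the image of x under i -> t, is
   the image of an element at a under a -> t, which is zero. *)

Section ConstMatrices.
Variable K : fieldType.

Lemma thinmx_eq p q (A B : 'M[K]_(p, q)) : q = 0%N -> A = B.
Proof. by move=> q0; subst q; rewrite (thinmx0 A) (thinmx0 B). Qed.

Lemma flatmx_eq p q (A B : 'M[K]_(p, q)) : p = 0%N -> A = B.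
Proof. by move=> p0; subst p; rewrite (flatmx0 A) (flatmx0 B). Qed.

Lemma mul_thinmx p q r (A : 'M[K]_(p, q)) (B : 'M[K]_(q, r)) : q = 0%N -> A *m B = 0.
Proof. by move=> q0; rewrite (thinmx_eq A 0) ?mul0mx. Qed.

Lemma mul_const_mx p q r (x y : K) :
  (const_mx x : 'M_(p, q)) *m (const_mx y : 'M_(q, r)) = const_mx (x * y *+ q).
Proof.
apply/matrixP => i j; rewrite !mxE.
under eq_bigr do rewrite !mxE.
by rewrite sumr_const card_ord.
Qed.

Lemma mul_const1_mx p q r : q = 1%N ->
  (const_mx 1 : 'M[K]_(p, q)) *m (const_mx 1 : 'M_(q, r)) = const_mx 1.
Proof. by move=> q1; rewrite mul_const_mx q1 mulr1. Qed.

Lemma mulmx_const1 p q (A : 'M[K]_(p, q)) : q = 1%N -> A *m const_mx 1 = A.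
Proof.
move=> q1; subst q; apply/matrixP => i j.
by rewrite !mxE big_ord1 !mxE mulr1 (ord1 j).
Qed.

Lemma mul_const1mx p q (A : 'M[K]_(p, q)) : p = 1%N -> const_mx 1 *m A = A.
Proof.
move=> p1; subst p; apply/matrixP => i j.
by rewrite !mxE big_ord1 !mxE mul1r (ord1 i).
Qed.

Lemma const1_scalar_mx p : p = 1%N -> (const_mx 1 : 'M[K]_p) = 1%:M.
Proof. by move=> p1; subst p; apply/matrixP => i j; rewrite !mxE (ord1 i) (ord1 j). Qed.

Lemma const1_mx_neq0 p q : (0 < p)%N -> (0 < q)%N -> (const_mx 1 : 'M[K]_(p, q)) != 0.
Proof.
case: p q => [|p] [|q] // _ _; apply/eqP => /matrixP /(_ 0 0).
by rewrite !mxE => /eqP; rewrite oner_eq0.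
Qed.

Lemma row_free_const1 p q :
  p = 0%N \/ (p = 1%N /\ q = 1%N) -> row_free (const_mx 1 : 'M[K]_(p, q)).
Proof.
case=> [p0 | [p1 q1]]; subst; first by rewrite /row_free -leqn0 rank_leq_row.
by rewrite const1_scalar_mx // row_free_unit unitmx1.
Qed.

Lemma row_full_const1 p q :
  q = 0%N \/ (p = 1%N /\ q = 1%N) -> row_full (const_mx 1 : 'M[K]_(p, q)).
Proof.
case=> [q0 | [p1 q1]]; subst; first by rewrite /row_full -leqn0 rank_leq_col.
by rewrite const1_scalar_mx // row_full_unit unitmx1.
Qed.

End ConstMatrices.

Section Paths.
Variable K : fieldType.
Implicit Types M N : rep K.

(* [path_mx M j l] lands in [rdim M (l + j)], which is only propositionally
   [rdim M m] for [m = l + j]; [conform_mx] transports it (junk [0] if [m < j]). *)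
Definition pathmx M (j m : nat) : 'M[K]_(rdim M j, rdim M m) :=
  conform_mx 0 (path_mx M j (m - j)).

Lemma pathmxxx M j : pathmx M j j = 1%:M.
Proof. by rewrite /pathmx subnn conform_mx_id. Qed.

Lemma pathmxS M j m : (j <= m)%N -> pathmx M j m.+1 = pathmx M j m *m rmap M m.
Proof.
move=> le_jm; rewrite /pathmx subSn //=.
have conform_rmap x (A : 'M[K]_(rdim M j, rdim M x)) : x = m ->
    conform_mx (0 : 'M_(rdim M j, rdim M m.+1)) (A *m rmap M x) =
    conform_mx 0 A *m rmap M m.
  by move=> ex; subst x; rewrite !conform_mx_id.
exact: conform_rmap (subnK le_jm).
Qed.

Lemma pathmx_trans M j l m : (j <= l <= m)%N ->
  pathmx M j m = pathmx M j l *m pathmx M l m.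
Proof.
case/andP=> le_jl; elim: m => [|m IHm].
  by rewrite leqn0 => /eqP->; rewrite pathmxxx mulmx1.
rewrite leq_eqVlt => /orP[/eqP<- | lt_lm]; first by rewrite pathmxxx mulmx1.
by rewrite !pathmxS ?(leq_trans le_jl) // IHm // mulmxA.
Qed.

Lemma pathmx_rmapl M j m : (j < m)%N -> pathmx M j m = rmap M j *m pathmx M j.+1 m.
Proof.
by move=> lt_jm; rewrite (@pathmx_trans M j j.+1) ?leqnSn // pathmxS // pathmxxx mul1mx.
Qed.

Lemma pathmx_hom M N (f : homT M N) j m : is_hom f -> (j <= m)%N ->
  pathmx M j m *m f m = f j *m pathmx N j m.
Proof.
move=> hom_f; elim: m => [|m IHm].
  by rewrite leqn0 => /eqP->; rewrite !pathmxxx mul1mx mulmx1.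
rewrite leq_eqVlt => /orP[/eqP<- | lt_jm]; first by rewrite !pathmxxx mul1mx mulmx1.
by rewrite !pathmxS // -mulmxA hom_f mulmxA IHm // mulmxA.
Qed.

Lemma pathmx_relation n c M l m : is_module n c M -> (l < n)%N -> (l + c l <= m)%N ->
  pathmx M l m = 0.
Proof.
(* Split at [c l + l], the literal target index of [path_mx M l (c l)]. *)
case=> _ rel_M lt_ln le_m; rewrite (@pathmx_trans M l (c l + l) m); last lia.
by rewrite {1}/pathmx addnK conform_mx_id rel_M // mul0mx.
Qed.

End Paths.

Lemma count_iota_upclosed (p : pred nat) m :
  (forall l l', (l <= l' < m)%N -> p l -> p l') ->
  forall l, (l < m)%N -> p l = (m - count p (iota 0 m) <= l)%N.
Proof.
elim: m => [|m IHm] p_up l // lt_lm.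
have le_cnt : (count p (iota 0 m) <= m)%N.
  by rewrite (leq_trans (count_size _ _)) ?size_iota.
rewrite -addn1 iotaD count_cat /= addn0 add0n.
case pm: (p m).
  move: lt_lm; rewrite ltnS leq_eqVlt => /orP[/eqP-> | lt_lm].
    by rewrite pm; apply/esym; lia.
  rewrite (IHm _ l lt_lm); first by apply/idP/idP; lia.
  by move=> x y xy; apply: p_up; lia.
have notp x : (x <= m)%N -> ~~ p x.
  by move=> le_xm; apply/negP => px; move: pm; rewrite (p_up x m) //; lia.
have -> : count p (iota 0 m) = 0%N.
  apply/eqP; rewrite -leqn0 leqNgt -has_count; apply/hasPn => x.
  by rewrite mem_iota => /andP[_ lt_xm]; apply: notp; lia.
by rewrite (negbTE (notp l _)) //; lia.
Qed.

Section Kupisch.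
Variables (n : nat) (c : nat -> nat).
Hypothesis kup : kupisch n c.

Lemma kupisch_bound i : (i < n)%N -> (i + c i <= n)%N.
Proof. by case: kup => _ _ _ _; apply. Qed.

Lemma kupisch_reach_mono l l' : (l <= l' < n)%N -> (l + c l <= l' + c l')%N.
Proof.
case: kup => _ _ c_ge2 c_step _; elim: l' => [|l' IHl'] /andP[le_ll' lt_l'n].
  by move: le_ll'; rewrite leqn0 => /eqP->.
move: le_ll'; rewrite leq_eqVlt => /orP[/eqP-> // | lt_ll'].
have := IHl' ltac:(lia); have := c_ge2 l' lt_l'n; have := c_step l' lt_l'n; lia.
Qed.

Lemma dimInj_leq t : (dimInj c t <= t.+1)%N.
Proof. by rewrite (leq_trans (count_size _ _)) ?size_iota. Qed.

Lemma reach_dimInj t l : (t < n)%N -> (l <= t)%N ->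
  (t < l + c l)%N = (t.+1 - dimInj c t <= l)%N.
Proof.
move=> lt_tn le_lt.
rewrite /dimInj (@count_iota_upclosed (fun l => t < l + c l)%N t.+1) //.
move=> x y /andP[le_xy lt_yt] /= lt_t; apply: (leq_trans lt_t).
by apply: kupisch_reach_mono; lia.
Qed.

End Kupisch.

Section IntervalModules.
Variable K : fieldType.
Local Notation Q := (quot_mod K).

Lemma rdim_quot_mod1 a k j : (a <= j < a + k)%N -> rdim (Q a k) j = 1%N.
Proof. by move=> /= ->. Qed.

Lemma rdim_quot_mod0 a k j : ~~ (a <= j < a + k)%N -> rdim (Q a k) j = 0%N.
Proof. by move=> /= /negbTE->. Qed.

Lemma rmap_quot_mod a k j : rmap (Q a k) j = const_mx 1.
Proof. by []. Qed.

Lemma pathmx_quot_mod a k j m : (a <= j <= m)%N -> (m < a + k)%N ->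
  pathmx (Q a k) j m = const_mx 1.
Proof.
case/andP=> le_aj le_jm lt_m.
have diag l : (a <= l < a + k)%N -> pathmx (Q a k) l l = const_mx 1.
  by move=> in_l; rewrite pathmxxx const1_scalar_mx // rdim_quot_mod1.
elim: m le_jm lt_m => [|m IHm] le_jm lt_m.
  have j0 : j = 0%N by lia.
  by subst j; apply: diag; lia.
have [jm | lt_jm] := eqVneq j m.+1; first by subst j; apply: diag; lia.
rewrite pathmxS; last lia.
by rewrite IHm ?mul_const1_mx //; [apply: rdim_quot_mod1 | ..]; lia.
Qed.

Lemma quot_mod_module n c a k : kupisch n c -> (a + k <= n)%N -> (k <= c a)%N ->
  is_module n c (Q a k).
Proof.
move=> kup le_n le_kc; split=> [j le_nj | l lt_ln]; first by apply: rdim_quot_mod0; lia.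
have [in_l | out_l] := boolP (a <= l < a + k)%N.
  apply: thinmx_eq; apply: rdim_quot_mod0.
  have reach_l : (a + c a <= l + c l)%N by apply: (kupisch_reach_mono kup); lia.
  lia.
by apply: flatmx_eq; apply: rdim_quot_mod0.
Qed.

Definition interval_map a k b m : homT (Q a k) (Q b m) := fun j => const_mx 1.

Lemma interval_map_hom a k b m : (b <= a)%N -> (b + m <= a + k)%N ->
  is_hom (interval_map a k b m).
Proof.
move=> le_ba le_end j; rewrite /interval_map !rmap_quot_mod !mul_const_mx.
have [in_j | out_j] := boolP (a <= j < a + k)%N; last first.
  by apply: flatmx_eq; apply: rdim_quot_mod0.
have [in_j1 | out_j1] := boolP (b <= j.+1 < b + m)%N; last first.
  by apply: thinmx_eq; apply: rdim_quot_mod0.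
by rewrite (@rdim_quot_mod1 a k j.+1) ?(@rdim_quot_mod1 b m j) //; lia.
Qed.

Lemma interval_map_mono a k b m : (b <= a)%N -> (a + k <= b + m)%N ->
  is_mono (interval_map a k b m).
Proof.
move=> le_ba le_end j; apply: row_free_const1.
have [in_j | out_j] := boolP (a <= j < a + k)%N; last by left; apply: rdim_quot_mod0.
by right; split; apply: rdim_quot_mod1; lia.
Qed.

Lemma interval_map_epi a k b m : (a <= b)%N -> (b + m <= a + k)%N ->
  is_epi (interval_map a k b m).
Proof.
move=> le_ab le_end j; apply: row_full_const1.
have [in_j | out_j] := boolP (b <= j < b + m)%N; last by left; apply: rdim_quot_mod0.
by right; split; apply: rdim_quot_mod1; lia.
Qed.

Lemma hom_quot_mod_factor (X : rep K) a k (g : homT X (Q a k)) j :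
  is_hom g -> (0 < k)%N -> (a <= j <= a + k - 1)%N ->
  g j = pathmx X j (a + k - 1) *m g (a + k - 1)%N *m const_mx 1.
Proof.
move=> hom_g k_gt0 /andP[le_aj le_jt].
rewrite (pathmx_hom hom_g le_jt) pathmx_quot_mod; [|lia..].
rewrite -mulmxA mul_const1_mx ?mulmx_const1 //; apply: rdim_quot_mod1; lia.
Qed.

Lemma exists_hom_from_quot_mod (X : rep K) a k (x : 'rV[K]_(rdim X a)) :
  (0 < k)%N -> x *m pathmx X a (a + k) = 0 ->
  exists u : homT (Q a k) X, is_hom u /\ const_mx 1 *m u a = x.
Proof.
move=> k_gt0 xJ.
exists (fun j => (const_mx 1 : 'M_(rdim (Q a k) j, 1)) *m (x *m pathmx X a j)); split.
  move=> j; have [in_j | out_j] := boolP (a <= j < a + k)%N; last first.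
    by apply: flatmx_eq; apply: rdim_quot_mod0.
  have [lt_j1 | le_j1] := ltnP j.+1 (a + k).
    rewrite !mulmxA rmap_quot_mod mul_const1_mx; last by apply: rdim_quot_mod1; lia.
    by rewrite -!mulmxA pathmxS //; lia.
  rewrite [LHS]mul_thinmx; last by apply: rdim_quot_mod0; lia.
  have end_j : (a + k = j.+1)%N by lia.
  rewrite -!mulmxA -pathmxS; last lia.
  by rewrite -end_j xJ !mulmx0.
rewrite pathmxxx mulmx1 mulmxA mul_const1_mx ?mul_const1mx //.
by apply: rdim_quot_mod1; lia.
Qed.

Lemma hom_quot_mod_top_ann (M : rep K) i k (f : homT (Q i k) M) : is_hom f ->
  (const_mx 1 : 'rV[K]_(rdim (Q i k) i)) *m f i *m pathmx M i (i + k) = 0.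
Proof.
move=> hom_f; rewrite -mulmxA -pathmx_hom ?leq_addr // mulmxA.
by apply: mul_thinmx; apply: rdim_quot_mod0; lia.
Qed.

Lemma mono_quot_mod_socle (M : rep K) i k (f : homT (Q i k) M) :
  is_hom f -> is_mono f -> (0 < k)%N ->
  (const_mx 1 : 'rV[K]_(rdim (Q i k) i)) *m f i *m pathmx M i (i + k - 1) != 0.
Proof.
move=> hom_f mono_f k_gt0; set t := (i + k - 1)%N.
rewrite -mulmxA -(pathmx_hom hom_f); last lia.
rewrite pathmx_quot_mod; [|lia..].
rewrite mulmxA mul_const1_mx; last by apply: rdim_quot_mod1; lia.
have : (const_mx 1 : 'rV[K]_(rdim (Q i k) t)) != 0.
  by apply: const1_mx_neq0; rewrite // rdim_quot_mod1 //; lia.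
apply: contraNneq => f1_0.
by rewrite -(inj_eq (row_free_inj (mono_f t))) /= f1_0 mul0mx.
Qed.

End IntervalModules.

Section InjectiveIntervals.
Variables (K : fieldType) (n : nat) (c : nat -> nat).
Hypothesis kup : kupisch n c.
Local Notation Q := (quot_mod K).

Lemma injective_path_lift (I : rep K) a b e (x : 'rV[K]_(rdim I b)) :
  injective_module n c I -> (a <= b < e)%N -> (e <= n)%N -> (e <= a + c a)%N ->
  x *m pathmx I b e = 0 -> exists y : 'rV[K]_(rdim I a), y *m pathmx I a b = x.
Proof.
move=> [_ injI] /andP[le_ab lt_be] le_en le_reach xJ.
have reach_b : (a + c a <= b + c b)%N by apply: (kupisch_reach_mono kup); lia.
have [u [hom_u ux]] : exists u : homT (Q b (e - b)) I, is_hom u /\ const_mx 1 *m u b = x.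
  by apply: exists_hom_from_quot_mod; rewrite ?subnKC //; lia.
set incl := interval_map K b (e - b) a (e - a).
have hom_incl : is_hom incl by apply: interval_map_hom; lia.
have mono_incl : is_mono incl by apply: interval_map_mono; lia.
have mod_b : is_module n c (Q b (e - b)) by apply: (quot_mod_module _ kup); lia.
have mod_a : is_module n c (Q a (e - a)) by apply: (quot_mod_module _ kup); lia.
have [h [hom_h eh]] := injI _ _ incl u mod_b mod_a hom_incl mono_incl hom_u.
exists (const_mx 1 *m h a).
rewrite -mulmxA -(pathmx_hom hom_h le_ab) pathmx_quot_mod; [|lia..].
rewrite mulmxA mul_const1_mx; last by apply: rdim_quot_mod1; lia.
rewrite -ux -eh mulmxA mul_const1_mx //; apply: rdim_quot_mod1; lia.
Qed.

Lemma quot_mod_injective a k : (0 < k)%N -> (a + k <= n)%N -> (k <= c a)%N ->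
  ((0 < a)%N -> (a.-1 + c a.-1 < a + k)%N) -> injective_module n c (Q a k).
Proof.
move=> k_gt0 le_n le_kc no_reach; split; first exact: quot_mod_module.
move=> X Y f g _ mod_Y hom_f mono_f hom_g.
set t := (a + k - 1)%N.
have [B fB] := row_freeP (mono_f t).
exists (fun j => pathmx Y j t *m (B *m g t) *m const_mx 1); split=> j.
  have [in_j | out_j] := boolP (a <= j < t)%N.
    rewrite -[RHS]mulmxA rmap_quot_mod mul_const1_mx; last by apply: rdim_quot_mod1; lia.
    by rewrite !mulmxA -pathmx_rmapl //; lia.
  have [e_ja | ne_ja] := eqVneq j.+1 a; last first.
    by apply: thinmx_eq; apply: rdim_quot_mod0; lia.
  rewrite [RHS]mul_thinmx; last by apply: rdim_quot_mod0; lia.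
  rewrite !mulmxA -pathmx_rmapl; last lia.
  subst a; move: (no_reach isT) => /= reach_j.
  by rewrite (pathmx_relation mod_Y) ?mul0mx //; lia.
have [in_j | out_j] := boolP (a <= j <= t)%N; last first.
  by apply: thinmx_eq; apply: rdim_quot_mod0; lia.
rewrite !mulmxA -(pathmx_hom hom_f); last lia.
by rewrite -(mulmxA (pathmx X j t)) fB mulmx1 -hom_quot_mod_factor.
Qed.

Lemma quot_mod_not_injective a k : (0 < k)%N -> (a + k <= n)%N -> (0 < a)%N ->
  (a + k <= a.-1 + c a.-1)%N -> ~ injective_module n c (Q a k).
Proof.
move=> k_gt0 le_n a_gt0 reach injQ.
set x := const_mx 1 : 'rV[K]_(rdim (Q a k) a).
have xJ : x *m pathmx (Q a k) a (a + k) = 0.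
  by apply: thinmx_eq; apply: rdim_quot_mod0; lia.
have [y yx] := @injective_path_lift (Q a k) a.-1 a (a + k) x injQ
  ltac:(lia) le_n reach xJ.
have /eqP[] : x != 0 by apply: const1_mx_neq0; rewrite // rdim_quot_mod1 //; lia.
by rewrite -yx; apply: mul_thinmx; apply: rdim_quot_mod0; lia.
Qed.

Lemma quot_mod_injectiveP a k : (0 < k)%N -> (a + k <= n)%N -> (k <= c a)%N ->
  k = dimInj c (a + k - 1) <-> injective_module n c (Q a k).
Proof.
move=> k_gt0 le_n le_kc; set t := (a + k - 1)%N; set d := dimInj c t.
have lt_tn : (t < n)%N by lia.
have le_d : (d <= t.+1)%N := dimInj_leq c t.
have start_le_a : (t.+1 - d <= a)%N by rewrite -(reach_dimInj kup) //; lia.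
have [a0 | a_gt0] := posnP a.
  split=> [_ | _]; last lia.
  by apply: quot_mod_injective => //; rewrite a0.
have reach_pred : (t < a.-1 + c a.-1)%N = (t.+1 - d <= a.-1)%N.
  by rewrite (reach_dimInj kup) //; lia.
split=> [k_eq | injQ].
  by apply: quot_mod_injective => // _; move: reach_pred; rewrite -k_eq; lia.
case: (eqVneq k d) => // ne; exfalso.
by apply: (quot_mod_not_injective k_gt0 le_n a_gt0 _ injQ); move: reach_pred; lia.
Qed.

End InjectiveIntervals.

Section Coresolutions.
Variables (K : fieldType) (n : nat) (c : nat -> nat).
Hypothesis kup : kupisch n c.
Local Notation Q := (quot_mod K).

Lemma quot_mod0_injective a : injective_module n c (Q a 0).
Proof.
have zero_dim j : rdim (Q a 0) j = 0%N by apply: rdim_quot_mod0; lia.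
split; first by split=> [j _ | l _]; [exact: zero_dim | apply: flatmx_eq].
move=> X Y f g _ _ _ _ _; exists (fun j => 0).
by split=> j; apply: thinmx_eq.
Qed.

Lemma injective_injdim_le1 (M : rep K) : injective_module n c M -> injdim_le1 n c M.
Proof.
move=> injM; exists M, (Q 0 0), (fun j => 1%:M), (fun j => 0); split.
- exact: injM.
- exact: quot_mod0_injective.
- by split=> j; [rewrite mulmx1 mul1mx | apply: thinmx_eq].
- by split=> j; [rewrite row_free_unit unitmx1 | rewrite /row_full mxrank0].
- by move=> j; rewrite mulmx0 submx1.
Qed.

Lemma injdim_le1_quot_mod s i k : (s <= i)%N ->
  injective_module n c (Q s (i + k - s)) -> injective_module n c (Q s (i - s)) ->
  injdim_le1 n c (Q i k).
Proof.
move=> le_si inj0 inj1.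
exists (Q s (i + k - s)), (Q s (i - s)),
  (interval_map K i k s (i + k - s)), (interval_map K s (i + k - s) s (i - s)).
split=> //.
- by split; apply: interval_map_hom; lia.
- by split; [apply: interval_map_mono | apply: interval_map_epi]; lia.
move=> j; rewrite /interval_map.
have [in_j | out_j] := boolP (i <= j < i + k)%N.
  split; first by apply: thinmx_eq; apply: rdim_quot_mod0; lia.
  by apply: submx_full; apply: row_full_const1; right; split; apply: rdim_quot_mod1; lia.
split; first by apply: flatmx_eq; apply: rdim_quot_mod0.
have [in_j' | out_j'] := boolP (s <= j < i)%N.
  rewrite (eqP (_ : kermx _ == 0)) ?sub0mx // kermx_eq0 row_free_const1 //.
  by right; split; apply: rdim_quot_mod1; lia.
by rewrite (flatmx_eq (kermx _) 0) ?sub0mx //; apply: rdim_quot_mod0; lia.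
Qed.

Lemma injdim_le1_quot_mod_reach i k a : (0 < k)%N -> (i + k <= n)%N ->
  (a.+1 < i)%N -> (i <= a + c a)%N -> (i + k <= a.+1 + c a.+1)%N ->
  injdim_le1 n c (Q i k) -> (i + k <= a + c a)%N.
Proof.
move=> k_gt0 le_n lt_ai reach_i reach_t.
case=> [I0 [I1 [f [g [inj0 inj1 [hom_f hom_g] [mono_f epi_g] exact_fg]]]]].
set x := (const_mx 1 : 'rV[K]_(rdim (Q i k) i)) *m f i.
have [y yx] : exists y : 'rV[K]_(rdim I0 a.+1), y *m pathmx I0 a.+1 i = x.
  apply: (@injective_path_lift K n c kup I0 a.+1 i (i + k)) => //; first lia.
  exact: hom_quot_mod_top_ann.
have [z zy] : exists z : 'rV[K]_(rdim I1 a), z *m pathmx I1 a a.+1 = y *m g a.+1.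
  apply: (@injective_path_lift K n c kup I1 a a.+1 i) => //; [lia | lia |].
  rewrite -mulmxA -(pathmx_hom hom_g) ?mulmxA ?yx; last lia.
  by rewrite -mulmxA (exact_fg i).1 mulmx0.
rewrite pathmxS // pathmxxx mul1mx in zy.
have [B gB] := row_fullP (epi_g a).
set u := z *m B.
have yu : y = u *m rmap I0 a.
  have : (u *m rmap I0 a - y <= f a.+1)%MS.
    apply: submx_trans (exact_fg a.+1).2; apply/sub_kermxP.
    by rewrite mulmxBl -mulmxA hom_g mulmxA -(mulmxA z) gB mulmx1 zy subrr.
  rewrite (flatmx_eq (f a.+1) 0); last by apply: rdim_quot_mod0; lia.
  by move/submx0null/eqP; rewrite subr_eq0 => /eqP.
rewrite leqNgt; apply/negP => not_reach.
have := mono_quot_mod_socle hom_f mono_f k_gt0; apply/negP; rewrite negbK -/x -yx yu.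
rewrite -mulmxA -pathmx_trans; last lia.
rewrite -mulmxA -pathmx_rmapl; last lia.
by rewrite (pathmx_relation inj0.1) ?mulmx0 //; lia.
Qed.

Lemma injdim_le1_dimInj i k : (i < n)%N ->
  (0 < k <= c i)%N -> injdim_le1 n c (quot_mod K i k) ->
  k = dimInj c (i + k - 1) \/
  (k < dimInj c (i + k - 1) /\ dimInj c (i + k - 1) - k = dimInj_pred c i)%N.
Proof.
move=> lt_in /andP[k_gt0 le_kc] idim.
set t := (i + k - 1)%N; set d := dimInj c t; set s := (t.+1 - d)%N.
have le_n : (i + k <= n)%N by have := kupisch_bound kup lt_in; lia.
have le_d : (d <= t.+1)%N := dimInj_leq c t.
have s_le_i : (s <= i)%N by rewrite -(reach_dimInj kup); lia.
have reach_s : (t < s + c s)%N by rewrite (reach_dimInj kup) -/d; lia.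
case: (eqVneq k d) => [| ne]; [by left | right].
have i_gt0 : (0 < i)%N by lia.
rewrite -[in dimInj_pred c i](prednK i_gt0) /=.
have le_d' := dimInj_leq c i.-1.
have s'_le_s : (i.-1.+1 - dimInj c i.-1 <= s)%N by rewrite -(reach_dimInj kup); lia.
have [lt_s's | ge_s's] := ltnP (i.-1.+1 - dimInj c i.-1) s; last lia.
have reach_i : (i.-1 < s.-1 + c s.-1)%N by rewrite (reach_dimInj kup) -/d; lia.
have reach_t : (i + k <= s.-1 + c s.-1)%N.
  have s_gt0 : (0 < s)%N by lia.
  by apply: (@injdim_le1_quot_mod_reach i k s.-1); rewrite ?prednK //; lia.
have : (t < s.-1 + c s.-1)%N by lia.
by rewrite (reach_dimInj kup) -/d; lia.
Qed.

Lemma dimInj_injdim_le1 i k : (i < n)%N ->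
  (0 < k <= c i)%N -> (k < dimInj c (i + k - 1))%N ->
  (dimInj c (i + k - 1) - k = dimInj_pred c i)%N -> injdim_le1 n c (quot_mod K i k).
Proof.
move=> lt_in /andP[k_gt0 le_kc].
set t := (i + k - 1)%N; set d := dimInj c t; set s := (t.+1 - d)%N => lt_kd d_pred.
have le_n : (i + k <= n)%N by have := kupisch_bound kup lt_in; lia.
have le_d : (d <= t.+1)%N := dimInj_leq c t.
have s_le_i : (s <= i)%N by rewrite -(reach_dimInj kup); lia.
have reach_s : (t < s + c s)%N by rewrite (reach_dimInj kup) -/d; lia.
have i_gt0 : (0 < i)%N by lia.
rewrite -[in dimInj_pred c i](prednK i_gt0) /= in d_pred.
apply: (@injdim_le1_quot_mod s) => //.
  apply/(quot_mod_injectiveP K kup); [lia | lia | lia |].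
  have -> : (s + (i + k - s) - 1 = t)%N by lia.
  rewrite -/d; lia.
apply/(quot_mod_injectiveP K kup); [lia | lia | lia |].
have -> : (s + (i - s) - 1 = i.-1)%N by lia.
lia.
Qed.

End Coresolutions.

Theorem mainTheorem5 (K : fieldType) (n : nat) (c : nat -> nat) (i k : nat) :
  kupisch n c -> (i < n)%N -> (1 <= k <= c i)%N ->
  (injdim_le1 n c (quot_mod K i k) <->
     (k = dimInj c (i + k - 1) \/
      ((k < dimInj c (i + k - 1))%N /\
       dimInj c (i + k - 1) - k = dimInj_pred c i)%N)) /\
  (k = dimInj c (i + k - 1) <-> injective_module n c (quot_mod K i k)).
Proof.
move=> kup lt_in k_range; have /andP[k_gt0 le_kc] := k_range.
have le_n : (i + k <= n)%N by have := kupisch_bound kup lt_in; lia.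
have injP := quot_mod_injectiveP K kup k_gt0 le_n le_kc.
split; last exact: injP.
split; first exact: (injdim_le1_dimInj kup lt_in k_range).
case=> [/injP | []]; first exact: injective_injdim_le1.
exact: (dimInj_injdim_le1 K kup lt_in k_range).
Qed.
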